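(* Let $\kappa$ be a regular infinite cardinal and $\mu$ a singular cardinal with $\mathrm{cf}(\mu)=\kappa$. Then $\mathfrak b({}^{\mu}\kappa,\le_\kappa)=\mathfrak b({}^{\mu}\kappa,\le_{\mathrm{all}})=\kappa$ and $\mathfrak b({}^{\mu}\kappa,\le_\mu)=\mathfrak b({}^{\mu}\kappa,\le_{\mathrm{bd}})=\kappa^+$.
   Context: For $f,g\in{}^{\mu}\kappa$ (functions $\mu\to\kappa$): $f\le_{\mathrm{bd}}g$ if $\{\alpha<\mu: g(\alpha)<f(\alpha)\}$ is bounded in $\mu$; for a cardinal $\nu$, $f\le_\nu g$ if $|\{\alpha<\mu: g(\alpha)<f(\alpha)\}|<\nu$; $f\le_{\mathrm{all}}g$ if $f(\alpha)\le g(\alpha)$ for all $\alpha<\mu$. For such a relation $\le_\bullet$, $\mathfrak b({}^{\mu}\kappa,\le_\bullet)$ is the least size of a set $B\subseteq{}^{\mu}\kappa$ for which there is no $g\in{}^{\mu}\kappa$ with $f\le_\bullet g$ for all $f\in B$. *)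

Set Implicit Arguments.
Unset Strict Implicit.

Definition le_card (A B : Type) : Prop :=
  exists f : A -> B, forall x y, f x = f y -> x = y.
Definition lt_card (A B : Type) : Prop := le_card A B /\ ~ le_card B A.
Definition eq_card (A B : Type) : Prop :=
  exists (f : A -> B) (g : B -> A),
    (forall x, g (f x) = x) /\ (forall y, f (g y) = y).

Record well_order (T : Type) (lt : T -> T -> Prop) : Prop := {
  wo_irrefl : forall x, ~ lt x x;
  wo_trans : forall x y z, lt x y -> lt y z -> lt x z;
  wo_total : forall x y, lt x y \/ x = y \/ lt y x;
  wo_wf : well_founded lt }.

Definition leq_of (T : Type) (lt : T -> T -> Prop) (x y : T) : Prop :=
  lt x y \/ x = y.

(* A cardinal = an initial ordinal: a well-order each of whose proper
   initial segments has strictly smaller cardinality. *)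
Definition is_cardinal (T : Type) (lt : T -> T -> Prop) : Prop :=
  well_order lt /\ forall x : T, lt_card {y : T | lt y x} T.

Definition infinite (T : Type) : Prop := le_card nat T.

Definition cofinal (T : Type) (lt : T -> T -> Prop) (X : T -> Prop) : Prop :=
  forall x : T, exists y, X y /\ leq_of lt x y.

(* cf(T, lt) = |K| : least cardinality of a cofinal subset is |K| *)
Definition cf_is (T : Type) (lt : T -> T -> Prop) (K : Type) : Prop :=
  (exists X, cofinal lt X /\ eq_card {y : T | X y} K) /\
  (forall X, cofinal lt X -> le_card K {y : T | X y}).

Definition regular (T : Type) (lt : T -> T -> Prop) : Prop := cf_is lt T.

(* the successor cardinal: L has cardinality kappa^+ where kappa = |K| *)
Definition is_succ_card (K L : Type) : Prop :=
  lt_card K L /\ forall X : Type, lt_card K X -> le_card L X.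

Section Rels.
Variables (M K : Type) (ltM : M -> M -> Prop) (ltK : K -> K -> Prop).

Definition le_bd (f g : M -> K) : Prop :=
  exists b : M, forall a : M, ltK (g a) (f a) -> leq_of ltM a b.

(* f <=_nu g : |{a | g a < f a}| < nu, with nu = |N| *)
Definition le_nu (N : Type) (f g : M -> K) : Prop :=
  lt_card {a : M | ltK (g a) (f a)} N.

Definition le_all (f g : M -> K) : Prop :=
  forall a : M, leq_of ltK (f a) (g a).

Definition bounded_family (R : (M -> K) -> (M -> K) -> Prop)
  (B : (M -> K) -> Prop) : Prop :=
  exists g : M -> K, forall f, B f -> R f g.

(* b(^mu kappa, R) = |N| : the least size of an unbounded family is |N| *)
Definition b_is (R : (M -> K) -> (M -> K) -> Prop) (N : Type) : Prop :=
  (exists B, ~ bounded_family R B /\ eq_card {f : M -> K | B f} N) /\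
  (forall B, lt_card {f : M -> K | B f} N -> bounded_family R B).
End Rels.
Arguments le_bd {M K} ltM ltK f g.
Arguments le_nu {M K} ltK N f g.
Arguments le_all {M K} ltK f g.
Arguments bounded_family {M K} R B.
Arguments b_is M K R N : clear implicits.

From Stdlib Require Import Classical ClassicalEpsilon FunctionalExtensionality.
From Stdlib Require Import ProofIrrelevance Cantor.

(* Fewer than kappa functions are bounded pointwise, by regularity of kappa. The kappa
   constant functions are unbounded for <=_all, and for <=_kappa too: a bound g would make
   every fibre of g small, so mu would be a kappa-union of sets of size < kappa.

   Given kappa functions f_k, fix a cofinal psi : kappa -> mu and k(a) with a <= psi(k(a)).
   If g(a) exceeds every f_k(a) with k < k(a), then f_k beats g only below
   sup_(j <= k) psi(j) < mu. Conversely, for alpha < kappa^+ let f_alpha write an injection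
   alpha -> kappa on every column {(x, beta) | beta < alpha} of mu ~ mu * mu. Given g, on
   each column some value of g recurs cofinally below kappa^+, so beyond a threshold
   alpha_x < kappa^+ the injection beats g somewhere on column x. As cf(mu) = kappa < kappa^+,
   a single alpha_* bounds mu many thresholds, and every f_alpha with alpha >= alpha_*
   beats g at mu points. *)

(** * Comparing cardinalities of types *)

Lemma sig_eq T (P : T -> Prop) (u v : {x | P x}) : proj1_sig u = proj1_sig v -> u = v.
Proof. apply eq_sig_hprop; intros; apply proof_irrelevance. Qed.

Lemma le_card_trans A B C : le_card A B -> le_card B C -> le_card A C.
Proof. intros [f Hf] [g Hg]; exists (fun x => g (f x)); auto. Qed.
Arguments le_card_trans {A B C}.

Lemma le_lt_card_trans {A B C} : le_card A B -> lt_card B C -> lt_card A C.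
Proof.
  intros H [H1 H2]; split; [exact (le_card_trans H H1)|].
  intro H3; exact (H2 (le_card_trans H3 H)).
Qed.

Lemma eq_card_le {A B} : eq_card A B -> le_card A B.
Proof. intros (f & g & H1 & _). exists f. intros x y E. rewrite <- (H1 x), <- (H1 y), E; auto. Qed.

Lemma eq_card_ge {A B} : eq_card A B -> le_card B A.
Proof. intros (f & g & _ & H2). exists g. intros x y E. rewrite <- (H2 x), <- (H2 y), E; auto. Qed.

Lemma le_card_sig {T} (P : T -> Prop) : le_card {x | P x} T.
Proof. exists (@proj1_sig _ _); intros; now apply sig_eq. Qed.

Lemma le_card_subset {T} (P Q : T -> Prop) :
  (forall x, P x -> Q x) -> le_card {x | P x} {x | Q x}.
Proof.
  intros H. exists (fun x => exist Q (proj1_sig x) (H _ (proj2_sig x))).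
  intros x y E. apply sig_eq. exact (f_equal (@proj1_sig _ _) E).
Qed.

Lemma le_card_prod {A B C D} : le_card A C -> le_card B D -> le_card (A * B) (C * D).
Proof.
  intros [f Hf] [g Hg]. exists (fun p => (f (fst p), g (snd p))).
  intros [a b] [c d] E; simpl in *. injection E; intros; f_equal; auto.
Qed.

Lemma le_card_option {A B} : le_card A B -> le_card (option A) (option B).
Proof.
  intros [f Hf]. exists (fun o => match o with None => None | Some a => Some (f a) end).
  intros [a|] [b|] E; try discriminate; auto. injection E; intro; f_equal; auto.
Qed.

Lemma le_card_nat_square : le_card (nat * nat) nat.
Proof. exists to_nat. intros x y E. rewrite <- (cancel_of_to x), <- (cancel_of_to y), E; auto. Qed.

(* Shift the copy of [nat] inside [T] by one to make room for [None]. *)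
Lemma le_card_option_infinite {T} : infinite T -> le_card (option T) T.
Proof.
  intros [i Hi].
  exists (fun o => match o with
    | None => i 0
    | Some t => if excluded_middle_informative (exists n, i n = t)
                then i (S (epsilon (inhabits 0) (fun n => i n = t))) else t end).
  assert (Hn : forall t (e : exists n, i n = t), i (epsilon (inhabits 0) (fun n => i n = t)) = t)
    by (intros t e; exact (epsilon_spec _ _ e)).
  intros [x|] [y|]; repeat destruct excluded_middle_informative as [?|?]; intro E.
  all: try (apply Hi in E; discriminate).
  all: try (exfalso; match goal with N : ~ (exists n, _ = _) |- _ =>
              apply N; eexists; (exact E || exact (eq_sym E)) end).
  - apply Hi in E; injection E; intro E'. rewrite <- (Hn x), <- (Hn y), E'; auto.
  - now subst.
  - reflexivity.
Qed.

Lemma le_card_range {A B} (f : A -> B) : le_card {y | exists x, f x = y} A.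
Proof.
  assert (Hx : forall y : {y | exists x, f x = y}, exists x, f x = proj1_sig y)
    by (intros [y hy]; exact hy).
  destruct (choice _ Hx) as [h Hh].
  exists h. intros y y' E. apply sig_eq. rewrite <- (Hh y), <- (Hh y'), E; auto.
Qed.

Lemma lt_card_of_empty A B : (A -> False) -> inhabited B -> lt_card A B.
Proof.
  intros HA [b]. split.
  - exists (fun a => False_rect _ (HA a)). intros a; destruct (HA a).
  - intros [f _]. exact (HA (f b)).
Qed.

Lemma eq_card_range_inj {A B} (f : A -> B) :
  (forall x y, f x = f y -> x = y) -> eq_card {y | exists x, f x = y} A.
Proof.
  intros Hf.
  assert (Hx : forall y : {y | exists x, f x = y}, exists x, f x = proj1_sig y)
    by (intros [y hy]; exact hy).
  destruct (choice _ Hx) as [h Hh].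
  exists h, (fun x => exist _ (f x) (ex_intro _ x eq_refl)). split.
  - intro y. apply sig_eq; simpl; auto.
  - intro x. apply Hf. exact (Hh _).
Qed.

Lemma enum_of_le_card {A B} (P : A -> Prop) : le_card {x | P x} B -> (exists x, P x) ->
  exists e : B -> A, (forall b, P (e b)) /\ forall x, P x -> exists b, e b = x.
Proof.
  intros [h Hh] [x0 p0].
  exists (fun b => proj1_sig (epsilon (inhabits (exist P x0 p0)) (fun y => h y = b))).
  split; [intro b; apply proj2_sig|].
  intros x px. exists (h (exist P x px)).
  assert (Hs := epsilon_spec (inhabits (exist P x0 p0)) (fun y => h y = h (exist P x px))
                  (ex_intro _ _ eq_refl)).
  apply Hh in Hs. rewrite Hs; reflexivity.
Qed.

Lemma inj_on_of_le_card {A B} {P : A -> Prop} (b0 : B) :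
  le_card {a | P a} B -> exists i : A -> B, forall x y, P x -> P y -> i x = i y -> x = y.
Proof.
  intros [h Hh].
  exists (fun a => match excluded_middle_informative (P a) with
                   | left p => h (exist _ a p) | right _ => b0 end).
  intros x y px py. do 2 (destruct excluded_middle_informative; [|contradiction]).
  intro E; apply Hh in E. exact (f_equal (@proj1_sig _ _) E).
Qed.

Lemma le_card_fibers {A B C} (c : A -> B) :
  (forall b, le_card {x | c x = b} C) -> le_card A (B * C).
Proof.
  intros H. destruct (classic (inhabited C)) as [[c0]|nC].
  - assert (HI : forall b, exists i : A -> C,
                forall x y, c x = b -> c y = b -> i x = i y -> x = y)
      by (intro b; exact (inj_on_of_le_card c0 (H b))).
    destruct (choice _ HI) as [I HI'].
    exists (fun x => (c x, I (c x) x)).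
    intros x y E. injection E; intros E2 E1. rewrite E1 in E2. exact (HI' (c y) x y E1 eq_refl E2).
  - assert (Hx : forall x : A, False).
    { intro x. destruct (H (c x)) as [h _]. exact (nC (inhabits (h (exist _ x eq_refl)))). }
    exists (fun x => False_rect _ (Hx x)). intro x; destruct (Hx x).
Qed.

Lemma le_card_leq_option {T} (lt : T -> T -> Prop) x :
  le_card {z | leq_of lt z x} (option {y | lt y x}).
Proof.
  exists (fun z => match excluded_middle_informative (proj1_sig z = x) with
            | left _ => None
            | right n => Some (exist _ (proj1_sig z)
                           (match proj2_sig z with or_introl h => h
                            | or_intror e => False_ind _ (n e) end)) end).
  intros [a ha] [b hb]; simpl.
  do 2 destruct excluded_middle_informative; intro E; try discriminate.
  - apply sig_eq; simpl; congruence.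
  - injection E; intro; apply sig_eq; auto.
Qed.

(** * Well-orders *)

Section WellOrder.
Variables (T : Type) (lt : T -> T -> Prop) (W : well_order lt).

Lemma wo_lt_asym x y : lt x y -> lt y x -> False.
Proof. intros h h'; exact (wo_irrefl W (wo_trans W h h')). Qed.

Lemma wo_leq_of_not_lt x y : ~ lt y x -> leq_of lt x y.
Proof. intros H; destruct (wo_total W x y) as [h|[h|h]]; red; auto; contradiction. Qed.

Lemma wo_not_lt_of_leq x y : leq_of lt x y -> ~ lt y x.
Proof. intros [h|<-] h'; [exact (wo_lt_asym _ _ h h') | exact (wo_irrefl W h')]. Qed.

Lemma wo_leq_lt_trans x y z : leq_of lt x y -> lt y z -> lt x z.
Proof. intros [h|<-] h'; auto. exact (wo_trans W h h'). Qed.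

Lemma wo_lt_leq_trans x y z : lt x y -> leq_of lt y z -> lt x z.
Proof. intros h [h'|<-]; auto. exact (wo_trans W h h'). Qed.

Lemma wo_leq_trans x y z : leq_of lt x y -> leq_of lt y z -> leq_of lt x z.
Proof. intros [h|<-] h'; auto. left; exact (wo_lt_leq_trans _ _ _ h h'). Qed.

Lemma wo_leq_max x y : exists z, leq_of lt x z /\ leq_of lt y z.
Proof. destruct (wo_total W x y) as [h|[<-|h]]; [exists y|exists x|exists x]; split; red; auto. Qed.

Lemma wo_min (P : T -> Prop) :
  (exists x, P x) -> exists x, P x /\ forall y, P y -> leq_of lt x y.
Proof.
  intros [x0 H0]. apply NNPP; intro Hn. revert H0.
  induction x0 as [x IH] using (well_founded_ind (wo_wf W)). intro Px.
  apply Hn. exists x; split; auto. intros y Py.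
  apply wo_leq_of_not_lt. intro h. exact (IH y h Py).
Qed.

(* Transfinite recursion: [F a] is some value of [B] missed by [F] below [a]; either
   this never gets stuck, or [F] maps an initial segment onto [B]. *)
Lemma wo_le_card_cases (B : Type) : le_card T B \/ exists a, le_card B {x | lt x a}.
Proof.
  destruct (classic (inhabited B)) as [[b0]|nB].
  2:{ destruct (classic (inhabited T)) as [[t0]|nT].
      - right. exists t0, (fun b => False_rect _ (nB (inhabits b))).
        intros b; destruct (nB (inhabits b)).
      - left. exists (fun t => False_rect _ (nT (inhabits t))).
        intros t; destruct (nT (inhabits t)). }
  set (step := fun a (rec : forall a', lt a' a -> B) =>
     epsilon (inhabits b0) (fun b => forall a' (h : lt a' a), rec a' h <> b)).
  set (F := Fix (wo_wf W) (fun _ => B) step).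
  assert (HF : forall a, F a = step a (fun a' _ => F a')).
  { intro a. apply (Fix_eq (wo_wf W) (fun _ => B) step). intros x f g Hfg. unfold step.
    replace f with g; auto.
    apply functional_extensionality_dep; intro y; apply functional_extensionality; auto. }
  assert (Hnew : forall a, (exists b, forall a', lt a' a -> F a' <> b) ->
                   forall a', lt a' a -> F a' <> F a).
  { intros a Ha a' h. rewrite (HF a). exact (epsilon_spec _ _ Ha a' h). }
  destruct (classic (forall a, exists b, forall a', lt a' a -> F a' <> b)) as [Hall|Hn].
  - left. exists F. intros x y E. destruct (wo_total W x y) as [h|[h|h]]; auto.
    + destruct (Hnew y (Hall y) x h E).
    + destruct (Hnew x (Hall x) y h (eq_sym E)).
  - right. apply not_all_ex_not in Hn. destruct Hn as [a Ha]. exists a.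
    assert (Hb : forall b, exists a' : {x | lt x a}, F (proj1_sig a') = b).
    { intro b. apply NNPP; intro H. apply Ha. exists b. intros a' h E. apply H.
      exists (exist _ a' h); auto. }
    destruct (choice _ Hb) as [g Hg]. exists g.
    intros x y E. rewrite <- (Hg x), <- (Hg y), E; auto.
Qed.

Lemma bounded_of_small_index (K I : Type) (b : I -> T) :
  (forall X, cofinal lt X -> le_card K {y | X y}) -> ~ le_card K I ->
  exists c, forall i, lt (b i) c.
Proof.
  intros Hcf HI.
  assert (Hnc : ~ cofinal lt (fun y => exists i, b i = y)).
  { intro H. exact (HI (le_card_trans (Hcf _ H) (le_card_range b))). }
  apply not_all_ex_not in Hnc. destruct Hnc as [c Hc]. exists c. intro i.
  apply NNPP; intro h. apply Hc. exists (b i). split; eauto. exact (wo_leq_of_not_lt _ _ h).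
Qed.

Lemma le_card_of_lt_succ L X : is_succ_card T L -> lt_card X L -> le_card X T.
Proof.
  intros [_ HL] [_ HXL]. destruct (wo_le_card_cases X) as [H|[a Ha]].
  - apply NNPP; intro Hn. exact (HXL (HL X (conj H Hn))).
  - exact (le_card_trans Ha (le_card_sig _)).
Qed.

End WellOrder.
Arguments wo_lt_asym {T lt} W {x y}.
Arguments wo_leq_of_not_lt {T lt} W {x y}.
Arguments wo_not_lt_of_leq {T lt} W {x y}.
Arguments wo_leq_lt_trans {T lt} W {x y z}.
Arguments wo_lt_leq_trans {T lt} W {x y z}.
Arguments wo_leq_trans {T lt} W {x y z}.
Arguments wo_leq_max {T lt} W x y.
Arguments wo_min {T lt} W P.
Arguments wo_le_card_cases {T lt} W B.
Arguments bounded_of_small_index {T lt} W {K I} b.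
Arguments le_card_of_lt_succ {T lt} W {L X}.

(** * Hessenberg's theorem: [T * T] embeds in an infinite cardinal [T] *)

Definition lex {A B} (ltA : A -> A -> Prop) (ltB : B -> B -> Prop) (p q : A * B) : Prop :=
  ltA (fst p) (fst q) \/ (fst p = fst q /\ ltB (snd p) (snd q)).

Lemma well_order_lex A B (ltA : A -> A -> Prop) (ltB : B -> B -> Prop) :
  well_order ltA -> well_order ltB -> well_order (lex ltA ltB).
Proof.
  intros WA WB; split.
  - intros [a b] [h|[_ h]]; [exact (wo_irrefl WA h) | exact (wo_irrefl WB h)].
  - intros [a b] [c d] [e f] [h|[h1 h2]] [h'|[h1' h2']]; simpl in *; subst; red; simpl.
    + left; exact (wo_trans WA h h').
    + left; auto.
    + left; auto.
    + right; split; auto; exact (wo_trans WB h2 h2').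
  - intros [a b] [c d]; unfold lex; simpl.
    destruct (wo_total WA a c) as [h|[<-|h]]; auto.
    destruct (wo_total WB b d) as [h|[<-|h]]; auto.
  - intros [a b]. revert b. induction a as [a IHa] using (well_founded_ind (wo_wf WA)).
    intro b. induction b as [b IHb] using (well_founded_ind (wo_wf WB)).
    constructor. intros [a' b'] [h|[e h]]; simpl in *.
    + apply IHa; auto.
    + subst; apply IHb; auto.
Qed.

Lemma well_order_pullback A B (f : A -> B) (ltB : B -> B -> Prop) :
  (forall x y, f x = f y -> x = y) -> well_order ltB -> well_order (fun x y => ltB (f x) (f y)).
Proof.
  intros Hf WB; split.
  - intros x; apply (wo_irrefl WB).
  - intros x y z; apply (wo_trans WB).
  - intros x y. destruct (wo_total WB (f x) (f y)) as [h|[h|h]]; auto.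
  - assert (H : forall y x, f x = y -> Acc (fun x y => ltB (f x) (f y)) x).
    { intro y. induction y as [y IH] using (well_founded_ind (wo_wf WB)).
      intros x <-. constructor. intros z hz. eapply IH; eauto. }
    intro x; eapply H; eauto.
Qed.
Arguments well_order_pullback {A B} f {ltB}.

Section Segment.
Variables (T : Type) (lt : T -> T -> Prop) (W : well_order lt) (c : T).

Definition seg_lt (x y : {z | lt z c}) : Prop := lt (proj1_sig x) (proj1_sig y).

Lemma well_order_seg : well_order seg_lt.
Proof. apply (well_order_pullback (@proj1_sig _ _)); auto. intros; apply sig_eq; auto. Qed.

Lemma eq_card_seg_seg (x : {z | lt z c}) :
  eq_card {y | seg_lt y x} {z | lt z (proj1_sig x)}.
Proof.
  exists (fun y => exist (fun z => lt z (proj1_sig x)) (proj1_sig (proj1_sig y)) (proj2_sig y)).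
  exists (fun z => exist (fun y => seg_lt y x)
                 (exist _ (proj1_sig z) (wo_trans W (proj2_sig z) (proj2_sig x))) (proj2_sig z)).
  split; intros; apply sig_eq; simpl; auto. apply sig_eq; auto.
Qed.

End Segment.
Arguments seg_lt {T} lt c.
Arguments well_order_seg {T lt} W c.
Arguments eq_card_seg_seg {T lt} W {c} x.

Section Cardinal.
Variables (T : Type) (lt : T -> T -> Prop) (C : is_cardinal lt).
Let W : well_order lt := proj1 C.

Lemma cardinal_seg_small x : ~ le_card T {y | lt y x}.
Proof. exact (proj2 (proj2 C x)). Qed.

(* If [m] were the maximum, [T] would inject into [T \ {m}] = [{y | lt y m}]:
   compose [le_card_option_infinite] with the swap of [m] and the image of [None]. *)
Lemma cardinal_no_max : infinite T -> forall m, exists y, lt m y.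
Proof.
  intros Hi m. apply NNPP; intro Hn.
  assert (Hm : forall y, y <> m -> lt y m).
  { intros y hy. destruct (wo_total W y m) as [h|[h|h]]; [auto|contradiction|exfalso; eauto]. }
  destruct (le_card_option_infinite Hi) as [s Hs].
  set (sw := fun y => if excluded_middle_informative (y = s None) then m
                      else if excluded_middle_informative (y = m) then s None else y).
  assert (sw_inj : forall x y, sw x = sw y -> x = y).
  { intros x y; unfold sw. repeat destruct excluded_middle_informative; intros; subst; congruence. }
  assert (Hne : forall t, sw (s (Some t)) <> m).
  { intros t; unfold sw. repeat destruct excluded_middle_informative; try congruence.
    apply Hs in e; discriminate. }
  apply (cardinal_seg_small m). exists (fun t => exist _ (sw (s (Some t))) (Hm _ (Hne t))).
  intros x y E. injection E; intro E'. apply sw_inj, Hs in E'. congruence.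
Qed.

(* Goedel's well-order on pairs. *)
Definition max_pair (p : T * T) : T :=
  if excluded_middle_informative (lt (fst p) (snd p)) then snd p else fst p.
Definition pair_lt (p q : T * T) : Prop :=
  lex lt (lex lt lt) (max_pair p, p) (max_pair q, q).

Lemma well_order_pair_lt : well_order pair_lt.
Proof.
  apply (well_order_pullback (fun p => (max_pair p, p))).
  - intros x y E. injection E; auto.
  - apply well_order_lex; auto. apply well_order_lex; auto.
Qed.

Lemma max_pair_ge p : leq_of lt (fst p) (max_pair p) /\ leq_of lt (snd p) (max_pair p).
Proof.
  unfold max_pair; destruct excluded_middle_informative; split; red; auto.
  exact (wo_leq_of_not_lt W n).
Qed.

Lemma max_pair_mono p q : pair_lt p q -> leq_of lt (max_pair p) (max_pair q).
Proof. intros [h|[h _]]; simpl in *; red; auto. Qed.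

(* A [pair_lt]-initial segment lies in a square [{y | lt y n}^2] with [n] below [T];
   if [T] embedded in it, [T] would embed in [{y | lt y n}]. *)
Lemma le_card_square_of_segments : infinite T ->
  (forall c, infinite {y | lt y c} -> le_card ({y | lt y c} * {y | lt y c}) {y | lt y c}) ->
  le_card (T * T) T.
Proof.
  intros Hi IH.
  destruct (wo_le_card_cases W nat) as [Hn|[a0 Ha0]].
  { exact (le_card_trans (le_card_prod Hn Hn) (le_card_trans le_card_nat_square Hi)). }
  destruct (wo_le_card_cases well_order_pair_lt T) as [H|[q Hq]]; auto. exfalso.
  destruct (cardinal_no_max Hi (max_pair q)) as [m hm].
  destruct (wo_leq_max W a0 m) as [n [h1 h2]].
  assert (Hq_n : lt (max_pair q) n) by exact (wo_lt_leq_trans W hm h2).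
  assert (Hinf : infinite {y | lt y n}).
  { apply (le_card_trans Ha0). apply le_card_subset. intros y hy. exact (wo_lt_leq_trans W hy h1). }
  assert (Hbelow : forall p, pair_lt p q -> lt (fst p) n /\ lt (snd p) n).
  { intros p hp. destruct (max_pair_ge p) as [h3 h4].
    pose proof (wo_leq_lt_trans W (max_pair_mono p q hp) Hq_n) as h5.
    split; eapply (wo_leq_lt_trans W); eauto. }
  assert (Hsq : le_card {p | pair_lt p q} ({y | lt y n} * {y | lt y n})).
  { exists (fun p => (exist _ (fst (proj1_sig p)) (proj1 (Hbelow _ (proj2_sig p))),
                     exist _ (snd (proj1_sig p)) (proj2 (Hbelow _ (proj2_sig p))))).
    intros [[a b] ha] [[c d] hc] E. injection E; intros; subst. apply sig_eq; simpl; auto. }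
  apply (cardinal_seg_small n).
  exact (le_card_trans Hq (le_card_trans Hsq (IH n Hinf))).
Qed.

End Cardinal.
Arguments cardinal_seg_small {T lt} C x.
Arguments cardinal_no_max {T lt} C _ m.
Arguments le_card_square_of_segments {T lt} C.

Lemma le_card_square_transfer {A B} : eq_card A B -> le_card (B * B) B -> le_card (A * A) A.
Proof.
  intros E H. apply (le_card_trans (le_card_prod (eq_card_le E) (eq_card_le E))).
  exact (le_card_trans H (eq_card_ge E)).
Qed.

Section Hessenberg.
Variables (T : Type) (lt : T -> T -> Prop) (C : is_cardinal lt).
Let W : well_order lt := proj1 C.

(* Induction on [c]: either [{y | lt y c}] is equinumerous with a shorter segment, or it
   is itself a cardinal and [le_card_square_of_segments] applies. *)
Lemma le_card_seg_square c :
  infinite {y | lt y c} -> le_card ({y | lt y c} * {y | lt y c}) {y | lt y c}.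
Proof.
  induction c as [c IH] using (well_founded_ind (wo_wf W)). intro Hinf.
  destruct (classic (exists d, lt d c /\ le_card {y | lt y c} {y | lt y d})) as [[d [hd Hd]]|Hn].
  - apply (le_card_trans (le_card_prod Hd Hd)).
    apply (le_card_trans (IH d hd (le_card_trans Hinf Hd))).
    apply le_card_subset; intros y hy; exact (wo_trans W hy hd).
  - assert (Cc : is_cardinal (seg_lt lt c)).
    { split; [exact (well_order_seg W c)|]. intros x. split; [apply le_card_sig|].
      intro H. apply Hn. exists (proj1_sig x); split; [exact (proj2_sig x)|].
      exact (le_card_trans H (eq_card_le (eq_card_seg_seg W x))). }
    apply (le_card_square_of_segments Cc Hinf).
    intros x Hx. apply (le_card_square_transfer (eq_card_seg_seg W x)). apply IH.
    + exact (proj2_sig x).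
    + exact (le_card_trans Hx (eq_card_le (eq_card_seg_seg W x))).
Qed.

Lemma le_card_square : infinite T -> le_card (T * T) T.
Proof. intro Hi. exact (le_card_square_of_segments C Hi le_card_seg_square). Qed.

End Hessenberg.
Arguments le_card_seg_square {T lt} C c.
Arguments le_card_square {T lt} C.

(** * The bounding numbers *)

Lemma bounded_family_mono {M K} {R R' : (M -> K) -> (M -> K) -> Prop} {B} :
  (forall f g, R f g -> R' f g) -> bounded_family R B -> bounded_family R' B.
Proof. intros H [g Hg]. exists g; auto. Qed.

Section Bounding.
Variables (M K : Type) (ltM : M -> M -> Prop) (ltK : K -> K -> Prop).
Hypotheses (CK : is_cardinal ltK) (IK : infinite K) (RK : regular ltK)
  (CM : is_cardinal ltM) (CF : cf_is ltM K) (KM : lt_card K M).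

Let WK : well_order ltK := proj1 CK.
Let WM : well_order ltM := proj1 CM.

Lemma infinite_M : infinite M.
Proof. exact (le_card_trans IK (proj1 KM)). Qed.

Lemma le_card_K_of_fibers {A} (c : A -> K) :
  (forall k, le_card {x | c x = k} K) -> le_card A K.
Proof. intro H. exact (le_card_trans (le_card_fibers c H) (le_card_square CK IK)). Qed.

Lemma bounded_K_of_small_index {I} (b : I -> K) : ~ le_card K I -> exists c, forall i, ltK (b i) c.
Proof. exact (bounded_of_small_index WK b (proj2 RK)). Qed.

Lemma bounded_M_of_small_index {I} (b : I -> M) : ~ le_card K I -> exists c, forall i, ltM (b i) c.
Proof. exact (bounded_of_small_index WM b (proj2 CF)). Qed.

Lemma not_le_card_K_leq k : ~ le_card K {j | leq_of ltK j k}.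
Proof.
  destruct (cardinal_no_max CK IK k) as [k' hk']. intro H. apply (cardinal_seg_small CK k').
  apply (le_card_trans H), le_card_subset. intros j hj. exact (wo_leq_lt_trans WK hj hk').
Qed.

Lemma cofinal_seq : exists psi : K -> M, forall a, exists k, leq_of ltM a (psi k).
Proof.
  destruct (proj1 CF) as [X [HX (phi & psi & H1 & _)]].
  exists (fun k => proj1_sig (psi k)). intros a. destruct (HX a) as [y [Xy hy]].
  exists (phi (exist _ y Xy)). rewrite H1. exact hy.
Qed.

Lemma pointwise_bounded_of_lt_card {B : (M -> K) -> Prop} : lt_card {f | B f} K ->
  exists g, forall f, B f -> forall a, ltK (f a) (g a).
Proof.
  intros [_ HB].
  assert (H : forall a : M, exists c, forall F : {f | B f}, ltK (proj1_sig F a) c)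
    by (intro a; exact (bounded_K_of_small_index (fun f : {f | B f} => proj1_sig f a) HB)).
  destruct (choice _ H) as [g Hg]. exists g. intros f hf a. exact (Hg a (exist _ f hf)).
Qed.

Definition const_family (f : M -> K) : Prop := exists k, f = fun _ => k.

Lemma eq_card_const_family : eq_card {f | const_family f} K.
Proof.
  destruct infinite_M as [iM _].
  exists (fun f => proj1_sig f (iM 0)),
         (fun k => exist const_family (fun _ => k) (ex_intro _ k eq_refl)).
  split.
  - intros [f [k ->]]. apply sig_eq; reflexivity.
  - reflexivity.
Qed.

Lemma const_family_unbounded_all : ~ bounded_family (le_all ltK) const_family.
Proof.
  intros [g Hg]. destruct infinite_M as [iM _].
  destruct (cardinal_no_max CK IK (g (iM 0))) as [k hk].
  exact (wo_not_lt_of_leq WK (Hg (fun _ => k) (ex_intro _ k eq_refl) (iM 0)) hk).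
Qed.

Lemma const_family_unbounded_nu : ~ bounded_family (le_nu ltK K) const_family.
Proof.
  intros [g Hg]. apply (proj2 KM). apply (le_card_K_of_fibers g). intro k.
  destruct (cardinal_no_max CK IK k) as [k' hk'].
  refine (le_card_trans (le_card_subset _ (fun a => ltK (g a) k') _)
                        (proj1 (Hg (fun _ => k') (ex_intro _ k' eq_refl)))).
  intros a ->. exact hk'.
Qed.

Lemma b_all : b_is M K (le_all ltK) K.
Proof.
  split.
  - exists const_family. split; [exact const_family_unbounded_all | exact eq_card_const_family].
  - intros B HB. destruct (pointwise_bounded_of_lt_card HB) as [g Hg].
    exists g. intros f hf a. left; auto.
Qed.

Lemma b_nu_K : b_is M K (le_nu ltK K) K.
Proof.
  split.
  - exists const_family. split; [exact const_family_unbounded_nu | exact eq_card_const_family].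
  - intros B HB. destruct (pointwise_bounded_of_lt_card HB) as [g Hg].
    exists g. intros f hf. apply lt_card_of_empty.
    + intros [a ha]. exact (wo_lt_asym WK ha (Hg f hf a)).
    + destruct IK as [iK _]. exact (inhabits (iK 0)).
Qed.

Lemma le_bd_le_nu f g : le_bd ltM ltK f g -> le_nu ltK M f g.
Proof.
  intros [b Hb]. destruct (cardinal_no_max CM infinite_M b) as [c hc].
  refine (le_lt_card_trans (le_card_subset _ (fun a => ltM a c) _) (proj2 CM c)).
  intros a ha. exact (wo_leq_lt_trans WM (Hb a ha) hc).
Qed.

Lemma le_bd_bounded_of_indexed (e : K -> M -> K) : exists g, forall k, le_bd ltM ltK (e k) g.
Proof.
  destruct cofinal_seq as [psi Hpsi]. destruct (choice _ Hpsi) as [k0 Hk0].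
  assert (Hg : forall a, exists c, forall j : {j | ltK j (k0 a)}, ltK (e (proj1_sig j) a) c).
  { intro a. apply (bounded_K_of_small_index (fun j : {j | ltK j (k0 a)} => e (proj1_sig j) a)).
    exact (cardinal_seg_small CK (k0 a)). }
  destruct (choice _ Hg) as [g Hg']. exists g. intro k.
  destruct (bounded_M_of_small_index (fun j : {j | leq_of ltK j k} => psi (proj1_sig j))
              (not_le_card_K_leq k)) as [c Hc].
  exists c. intros a ha. left.
  assert (Hk : leq_of ltK (k0 a) k).
  { apply (wo_leq_of_not_lt WK). intro h. exact (wo_lt_asym WK ha (Hg' a (exist _ k h))). }
  exact (wo_leq_lt_trans WM (Hk0 a) (Hc (exist _ (k0 a) Hk))).
Qed.

Lemma bounded_bd_of_le_card_K (B : (M -> K) -> Prop) :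
  le_card {f | B f} K -> bounded_family (le_bd ltM ltK) B.
Proof.
  intros HB. destruct (classic (exists f, B f)) as [Hne|Hempty].
  - destruct (enum_of_le_card B HB Hne) as [e He].
    destruct (le_bd_bounded_of_indexed e) as [g Hg].
    exists g. intros f hf. destruct (proj2 He f hf) as [k <-]. exact (Hg k).
  - destruct IK as [iK _]. exists (fun _ => iK 0). intros f hf. destruct (Hempty (ex_intro _ f hf)).
Qed.

(* [below_succ x] means [x < kappa^+]; that [kappa^+ < mu] is [exists_not_below_succ]. *)
Definition below_succ (x : M) : Prop := le_card {y | ltM y x} K.

Lemma below_succ_down {x y} : below_succ x -> ltM y x -> below_succ y.
Proof.
  intros H h. apply (fun S => le_card_trans S H), le_card_subset.
  intros z hz. exact (wo_trans WM hz h).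
Qed.

Lemma below_succ_leq {x} : below_succ x -> le_card {z | leq_of ltM z x} K.
Proof.
  intros H. apply (le_card_trans (le_card_leq_option ltM x)).
  exact (le_card_trans (le_card_option H) (le_card_option_infinite IK)).
Qed.

(* Otherwise [M] would be the [K]-union of the small sets [{a | a <= psi k}]. *)
Lemma exists_not_below_succ : exists z, ~ below_succ z.
Proof.
  apply NNPP; intro Hn. apply (proj2 KM).
  destruct cofinal_seq as [psi Hpsi]. destruct (choice _ Hpsi) as [k0 Hk0].
  apply (le_card_K_of_fibers k0). intro k.
  refine (le_card_trans (le_card_subset _ (fun a => leq_of ltM a (psi k)) _) _).
  - intros a <-. exact (Hk0 a).
  - apply below_succ_leq. apply NNPP; intro h. exact (Hn (ex_intro _ (psi k) h)).
Qed.

Lemma below_succ_bound : exists z, forall x, below_succ x -> ltM x z.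
Proof.
  destruct exists_not_below_succ as [z hz]. exists z. intros x px. apply NNPP; intro h.
  destruct (wo_leq_of_not_lt WM h) as [h'|<-]; [exact (hz (below_succ_down px h')) | exact (hz px)].
Qed.

Lemma below_succ_not_le_card_K : ~ le_card {x | below_succ x} K.
Proof.
  intro H. destruct (wo_min WM _ exists_not_below_succ) as [z [hz hmin]].
  apply hz, (fun S => le_card_trans S H), le_card_subset.
  intros y hy. apply NNPP; intro hn. exact (wo_not_lt_of_leq WM (hmin y hn) hy).
Qed.

Lemma exists_below_succ : exists x, below_succ x.
Proof.
  apply NNPP; intro Hn. apply below_succ_not_le_card_K.
  exists (fun x => False_rect _ (Hn (ex_intro _ _ (proj2_sig x)))).
  intros x; destruct (Hn (ex_intro _ _ (proj2_sig x))).
Qed.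

Lemma lt_card_K_below_succ : lt_card K {x | below_succ x}.
Proof.
  split; [|exact below_succ_not_le_card_K].
  destruct (wo_le_card_cases WK {x | below_succ x}) as [H|[k Hk]]; auto.
  destruct (below_succ_not_le_card_K (le_card_trans Hk (le_card_sig _))).
Qed.

(* Regularity of the successor cardinal: if no [below_succ] bound existed, every
   [below_succ] point would lie below some [b k], making [{x | below_succ x}] a
   [K]-union of [K]-sized sets. *)
Lemma below_succ_sup (b : K -> M) : (forall k, below_succ (b k)) ->
  exists c, below_succ c /\ forall k, ltM (b k) c.
Proof.
  intros Hb. apply NNPP; intro Hn.
  assert (Hc : forall x : {x | below_succ x}, exists k, leq_of ltM (proj1_sig x) (b k)).
  { intros [x px]. apply NNPP; intro H. apply Hn. exists x. split; auto. intro k.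
    apply NNPP; intro h. apply H. exists k. exact (wo_leq_of_not_lt WM h). }
  destruct (choice _ Hc) as [kx Hkx].
  apply below_succ_not_le_card_K, (le_card_K_of_fibers kx). intro k.
  apply (fun S => le_card_trans S (below_succ_leq (Hb k))).
  exists (fun y => exist (fun z => leq_of ltM z (b k)) (proj1_sig (proj1_sig y))
                   (eq_ind _ (fun j => leq_of ltM _ (b j)) (Hkx _) _ (proj2_sig y))).
  intros y y' E. injection E; intro E'. apply sig_eq, sig_eq; exact E'.
Qed.

Lemma exists_unbounded_value (h : M -> K) : exists j, forall b, below_succ b ->
  exists be, below_succ be /\ h be = j /\ leq_of ltM b be.
Proof.
  apply NNPP; intro Hn.
  assert (Hb : forall j, exists b, below_succ b /\
                 forall be, below_succ be -> h be = j -> ltM be b).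
  { intro j. apply NNPP; intro H. apply Hn. exists j. intros b pb. apply NNPP; intro H'.
    apply H. exists b; split; auto. intros be pbe hbe. apply NNPP; intro h'. apply H'.
    exists be. repeat split; auto. exact (wo_leq_of_not_lt WM h'). }
  destruct (choice _ Hb) as [bj Hbj].
  destruct (below_succ_sup bj (fun j => proj1 (Hbj j))) as [c [pc Hc]].
  exact (wo_lt_asym WM (proj2 (Hbj (h c)) c pc eq_refl) (Hc (h c))).
Qed.

(* Minimal segments bounding the preimages are monotone in [al]; if they were unbounded
   in [M], [K] of them would already be cofinal, yet [K] indices have a [below_succ]
   supremum whose segment dominates them all. *)
Lemma preimage_seg_bound (A : M -> M) :
  (forall al, below_succ al -> ~ le_card M {x | leq_of ltM (A x) al}) ->
  exists cs, forall al, below_succ al -> le_card {x | leq_of ltM (A x) al} {y | ltM y cs}.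
Proof.
  intros Hsmall.
  assert (Hcc : forall al, exists c, below_succ al ->
      le_card {x | leq_of ltM (A x) al} {y | ltM y c} /\
      forall c', le_card {x | leq_of ltM (A x) al} {y | ltM y c'} -> leq_of ltM c c').
  { intro al. destruct (classic (below_succ al)) as [pal|npal]; [|exists al; contradiction].
    destruct (wo_le_card_cases WM {x | leq_of ltM (A x) al}) as [H|Hc].
    - destruct (Hsmall al pal H).
    - destruct (wo_min WM _ Hc) as [c [h1 h2]]. exists c; auto. }
  destruct (choice _ Hcc) as [cc Hcc'].
  assert (mono : forall al al', below_succ al -> below_succ al' -> ltM al al' ->
                   leq_of ltM (cc al) (cc al')).
  { intros al al' pal pal' hlt. apply (proj2 (Hcc' al pal)).
    apply (fun S => le_card_trans S (proj1 (Hcc' al' pal'))), le_card_subset.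
    intros x hx. exact (wo_leq_trans WM hx (or_introl hlt)). }
  apply NNPP; intro Hn.
  assert (Hex : forall c, exists al, below_succ al /\ ltM c (cc al)).
  { intro c. apply NNPP; intro H. apply Hn. exists c. intros al pal.
    apply (le_card_trans (proj1 (Hcc' al pal))), le_card_subset. intros y hy.
    apply (wo_lt_leq_trans WM hy), (wo_leq_of_not_lt WM). intro h. apply H; eauto. }
  destruct cofinal_seq as [psi Hpsi].
  destruct (choice _ (fun k => Hex (psi k))) as [ak Hak].
  destruct (below_succ_sup ak (fun k => proj1 (Hak k))) as [al [pal Hal]].
  destruct (cardinal_no_max CM infinite_M (cc al)) as [c hc].
  destruct (Hpsi c) as [k hk]. apply (wo_irrefl WM (x := c)).
  apply (wo_leq_lt_trans WM hk), (wo_lt_leq_trans WM (proj2 (Hak k))).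
  exact (wo_leq_trans WM (mono _ _ (proj1 (Hak k)) pal (Hal k)) (or_introl hc)).
Qed.

(* Otherwise [M] embeds in [{al | below_succ al} * {y | ltM y cs}], hence in the square
   of a proper initial segment of [M]. *)
Lemma exists_large_preimage (A : M -> M) : (forall x, below_succ (A x)) ->
  exists al, below_succ al /\ le_card M {x | leq_of ltM (A x) al}.
Proof.
  intros HA. apply NNPP; intro Hn.
  destruct (preimage_seg_bound A) as [cs Hcs]; [intros al pal H; apply Hn; eauto|].
  destruct below_succ_bound as [z Hz].
  destruct (wo_le_card_cases WM K) as [HMK|[e He]]; [exact (proj2 KM HMK)|].
  destruct (wo_leq_max WM z cs) as [d1 [hz hcs]]. destruct (wo_leq_max WM d1 e) as [d [hd1 he]].
  assert (Hseg : forall c, leq_of ltM c d -> le_card {y | ltM y c} {y | ltM y d})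
    by (intros c hc; apply le_card_subset; intros y hy; exact (wo_lt_leq_trans WM hy hc)).
  assert (Hinf : infinite {y | ltM y d}) by exact (le_card_trans IK (le_card_trans He (Hseg e he))).
  apply (cardinal_seg_small CM d), (fun S => le_card_trans S (le_card_seg_square CM d Hinf)).
  refine (le_card_trans (le_card_fibers (C := {y | ltM y cs})
                           (fun x => exist below_succ (A x) (HA x)) _) (le_card_prod _ _)).
  - intros [al pal]. apply (fun S => le_card_trans S (Hcs al pal)), le_card_subset.
    intros x hx. right. exact (f_equal (@proj1_sig _ _) hx).
  - exists (fun al => exist _ (proj1_sig al)
                        (wo_lt_leq_trans WM (Hz _ (proj2_sig al)) (wo_leq_trans WM hz hd1))).
    intros al al' E. injection E; intro. apply sig_eq; auto.
  - exact (Hseg cs (wo_leq_trans WM hcs hd1)).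
Qed.

Section SuccFamily.
Variables (p : M * M -> M) (E : M -> M -> K) (km : K).
Hypotheses (p_inj : forall q q', p q = p q' -> q = q')
  (E_inj : forall al, below_succ al -> forall be be', ltM be al -> ltM be' al ->
             E al be = E al be' -> be = be')
  (E_km : forall al be, E al be <> km).

(* Some value [j] of [h] is taken cofinally often below [kappa^+], hence on a set of
   size [K]; above all those points, [E al] cannot stay below [h], since [E al] is
   injective and only fewer than [K] values lie below [j]. *)
Lemma exists_threshold (h : M -> K) : exists ax, below_succ ax /\
  forall al, below_succ al -> leq_of ltM ax al -> exists be, ltM be al /\ ltK (h be) (E al be).
Proof.
  destruct (exists_unbounded_value h) as [j Hj].
  set (Phi := fun be => below_succ be /\ h be = j).
  assert (HPhi : le_card K {be | Phi be}).
  { destruct (wo_le_card_cases WK {be | Phi be}) as [H|[k Hk]]; auto. exfalso.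
    destruct exists_below_succ as [b0 pb0].
    destruct (Hj b0 pb0) as [be0 [pbe0 [hbe0 _]]].
    destruct (enum_of_le_card Phi (le_card_trans Hk (le_card_sig _))
                (ex_intro _ be0 (conj pbe0 hbe0))) as [en [Hen1 Hen2]].
    destruct (below_succ_sup en (fun k => proj1 (Hen1 k))) as [c [pc Hc]].
    destruct (Hj c pc) as [be [pbe [hbe hle]]]. destruct (Hen2 be (conj pbe hbe)) as [i <-].
    exact (wo_not_lt_of_leq WM hle (Hc i)). }
  destruct HPhi as [tau Htau].
  destruct (below_succ_sup (fun i => proj1_sig (tau i)) (fun i => proj1 (proj2_sig (tau i))))
    as [ax [pax Hax]].
  exists ax. split; auto. intros al pal hal. apply NNPP; intro Hn.
  assert (Hlt : forall i, ltM (proj1_sig (tau i)) al)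
    by (intro i; exact (wo_lt_leq_trans WM (Hax i) hal)).
  assert (Hle : forall i, leq_of ltK (E al (proj1_sig (tau i))) j).
  { intro i. rewrite <- (proj2 (proj2_sig (tau i))). apply (wo_leq_of_not_lt WK). intro h'.
    apply Hn. exists (proj1_sig (tau i)). auto. }
  apply (not_le_card_K_leq j). exists (fun i => exist (fun v => leq_of ltK v j) _ (Hle i)).
  intros i i' E'. injection E'; intro E''. apply Htau, sig_eq.
  exact (E_inj al pal _ _ (Hlt i) (Hlt i') E'').
Qed.

(* [succ_family al] writes the injection [E al] on every column [p (x, _)] below [al],
   and the value [km], which [E] avoids, elsewhere; this makes [al] recoverable. *)
Definition succ_family (al a : M) : K :=
  match excluded_middle_informative (exists q, ltM (snd q) al /\ p q = a) with
  | left h => E al (snd (proj1_sig (constructive_indefinite_description _ h)))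
  | right _ => km
  end.

Lemma succ_family_at {x be al} : ltM be al -> succ_family al (p (x, be)) = E al be.
Proof.
  intros h. unfold succ_family. destruct excluded_middle_informative as [e|n].
  - destruct constructive_indefinite_description as [q Hq]; simpl.
    destruct Hq as [_ hq]. apply p_inj in hq. now subst.
  - exfalso; apply n; exists (x, be); auto.
Qed.

Lemma succ_family_out {x be al} : ~ ltM be al -> succ_family al (p (x, be)) = km.
Proof.
  intros h. unfold succ_family. destruct excluded_middle_informative as [e|n]; auto.
  destruct constructive_indefinite_description as [q Hq]; simpl.
  destruct Hq as [hq hpq]. apply p_inj in hpq. now subst.
Qed.

Lemma succ_family_inj al al' : succ_family al = succ_family al' -> al = al'.
Proof.
  intros Heq. destruct infinite_M as [iM _].
  destruct (wo_total WM al al') as [h|[h|h]]; auto; exfalso.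
  - pose proof (f_equal (fun f => f (p (iM 0, al))) Heq) as H; simpl in H.
    rewrite (succ_family_out (wo_irrefl WM (x := al))), (succ_family_at h) in H.
    exact (E_km _ _ (eq_sym H)).
  - pose proof (f_equal (fun f => f (p (iM 0, al'))) Heq) as H; simpl in H.
    rewrite (succ_family_out (wo_irrefl WM (x := al'))), (succ_family_at h) in H.
    exact (E_km _ _ H).
Qed.

Lemma succ_family_dominates (g : M -> K) : exists al0, below_succ al0 /\
  forall al, below_succ al -> leq_of ltM al0 al -> le_card M {a | ltK (g a) (succ_family al a)}.
Proof.
  destruct (choice _ (fun x => exists_threshold (fun be => g (p (x, be))))) as [A HA].
  destruct (exists_large_preimage A (fun x => proj1 (HA x))) as [als [pals Hals]].
  exists als. split; auto. intros al pal hal.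
  assert (Hbe : forall x, exists be, leq_of ltM (A x) als ->
                  ltM be al /\ ltK (g (p (x, be))) (E al be)).
  { intro x. destruct (classic (leq_of ltM (A x) als)) as [h|h]; [|exists x; contradiction].
    destruct (proj2 (HA x) al pal (wo_leq_trans WM h hal)) as [be hbe]. exists be; auto. }
  destruct (choice _ Hbe) as [bx Hbx].
  apply (le_card_trans Hals).
  assert (Hwin : forall y : {x | leq_of ltM (A x) als},
      ltK (g (p (proj1_sig y, bx (proj1_sig y))))
          (succ_family al (p (proj1_sig y, bx (proj1_sig y))))).
  { intros [x hx]; simpl. destruct (Hbx x hx) as [h1 h2]. rewrite (succ_family_at h1). exact h2. }
  exists (fun y => exist (fun a => ltK (g a) (succ_family al a)) _ (Hwin y)).
  intros y y' E'. injection E'; intro E''. apply p_inj in E''. injection E''; intros.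
  apply sig_eq; auto.
Qed.

End SuccFamily.

Lemma exists_seg_injections : exists (E : M -> M -> K) (km : K),
  (forall al, below_succ al -> forall be be', ltM be al -> ltM be' al ->
     E al be = E al be' -> be = be') /\ (forall al be, E al be <> km).
Proof.
  destruct (le_card_option_infinite IK) as [s Hs]. destruct IK as [iK _].
  assert (He : forall al, exists e : M -> K, below_succ al ->
             forall be be', ltM be al -> ltM be' al -> e be = e be' -> be = be').
  { intro al. destruct (classic (below_succ al)) as [pal|npal].
    - destruct (inj_on_of_le_card (iK 0) pal) as [e He]. exists e; auto.
    - exists (fun _ => iK 0); contradiction. }
  destruct (choice _ He) as [e He'].
  exists (fun al be => s (Some (e al be))), (s None). split.
  - intros al pal be be' h h' E'. apply Hs in E'. injection E'; intro. eapply He'; eauto.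
  - intros al be E'. apply Hs in E'. discriminate.
Qed.

Lemma unbounded_succ_family {L} : is_succ_card K L -> exists F : L -> (M -> K),
  (forall l l', F l = F l' -> l = l') /\ forall g, exists l, le_card M {a | ltK (g a) (F l a)}.
Proof.
  intros HL.
  destruct (le_card_square CM infinite_M) as [p Hp].
  destruct exists_seg_injections as (E & km & E_inj & E_km).
  destruct (proj2 HL _ lt_card_K_below_succ) as [j Hj].
  assert (Hunb : forall a0, below_succ a0 -> exists l, leq_of ltM a0 (proj1_sig (j l))).
  { intros a0 pa0. apply NNPP; intro Hn. apply (proj2 (proj1 HL)), (fun S => le_card_trans S pa0).
    assert (Hl : forall l, ltM (proj1_sig (j l)) a0).
    { intro l. apply NNPP; intro h. apply Hn. exists l. exact (wo_leq_of_not_lt WM h). }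
    exists (fun l => exist _ (proj1_sig (j l)) (Hl l)). intros l l' E'. apply Hj, sig_eq.
    exact (f_equal (@proj1_sig _ _) E'). }
  exists (fun l => succ_family p E km (proj1_sig (j l))). split.
  - intros l l' E'. apply Hj, sig_eq. exact (succ_family_inj p E km Hp E_km _ _ E').
  - intro g. destruct (succ_family_dominates p E km Hp E_inj g) as [al0 [pal0 Hal0]].
    destruct (Hunb al0 pal0) as [l hl]. exists l. exact (Hal0 _ (proj2_sig (j l)) hl).
Qed.

Lemma b_succ L : is_succ_card K L ->
  b_is M K (le_nu ltK M) L /\ b_is M K (le_bd ltM ltK) L.
Proof.
  intros HL. destruct (unbounded_succ_family HL) as [F [HFi HFu]].
  assert (Hnu : ~ bounded_family (le_nu ltK M) (fun f => exists l, F l = f)).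
  { intros [g Hg]. destruct (HFu g) as [l Hl]. exact (proj2 (Hg (F l) (ex_intro _ l eq_refl)) Hl). }
  split; split.
  - exists (fun f => exists l, F l = f). split; [exact Hnu | exact (eq_card_range_inj F HFi)].
  - intros B HB. apply (bounded_family_mono le_bd_le_nu), bounded_bd_of_le_card_K.
    exact (le_card_of_lt_succ WK HL HB).
  - exists (fun f => exists l, F l = f). split; [|exact (eq_card_range_inj F HFi)].
    intro Hbd. exact (Hnu (bounded_family_mono le_bd_le_nu Hbd)).
  - intros B HB. apply bounded_bd_of_le_card_K. exact (le_card_of_lt_succ WK HL HB).
Qed.

End Bounding.

Theorem mainTheorem17 :
  forall (M K : Type) (ltM : M -> M -> Prop) (ltK : K -> K -> Prop),
    is_cardinal ltK -> infinite K -> regular ltK ->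
    is_cardinal ltM -> cf_is ltM K -> lt_card K M ->
    b_is M K (le_nu ltK K) K /\ b_is M K (le_all ltK) K /\
    (forall L : Type, is_succ_card K L ->
       b_is M K (le_nu ltK M) L /\ b_is M K (le_bd ltM ltK) L).
Proof.
  intros M K ltM ltK CK IK RK CM CF KM.
  split; [|split].
  - now apply b_nu_K.
  - now apply b_all.
  - intros L HL. now apply b_succ.
Qed.
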